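(* Let $\mu$ be a probability on sentences. The following are equivalent: (1) $\mu$ is Gaifman; (2) $\mu(r\neq s)=\sup_{\{t_1,\dots,t_n\}}\mu(\bigvee_{i=1}^n((r\,t_i)\neq(s\,t_i)))$ for every pair $r,s$ of closed terms of the same function type $\alpha\to\beta$, the supremum ranging over all finite sets of closed terms of type $\alpha$; (3) $\mu(\exists x.\varphi)=\sup_{\{t_1,\dots,t_n\}}\mu(\bigvee_{i=1}^n\varphi\{x/t_i\})$ for every formula $\varphi$ with a single free variable $x$, of type $\alpha$ say, the supremum ranging over all finite sets of closed terms of type $\alpha$; (4) $\mu(\forall x.\varphi)=\inf_{\{t_1,\dots,t_n\}}\mu(\bigwedge_{i=1}^n\varphi\{x/t_i\})$ for every formula $\varphi$ with a single free variable $x$, of type $\alpha$ say, the infimum ranging over all finite sets of closed terms of type $\alpha$.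
   Context: Setting: higher-order logic (Church's simple theory of types, without a description operator), with Henkin semantics. Types are generated from $o$ and $\imath$ by $\alpha\to\beta$; terms are built from variables and constants (including equality constants) by $\lambda$-abstraction and application; connectives and quantifiers are defined from equality, with $\forall x.\varphi$ being $\lambda x.\varphi=\lambda x.\top$ and $\exists x.\varphi$ being $\lambda x.\varphi\neq\lambda x.\bot$. A formula is a term of type $o$, a sentence a closed formula; $\mathcal S$ is the set of sentences; $\varphi\{x/t\}$ denotes substitution of $t$ for free occurrences of $x$. A sentence is valid if true in every interpretation. A probability on sentences is a non-negative $\mu:\mathcal S\to\mathbb R$ with $\mu(\varphi)=1$ for valid $\varphi$ and $\mu(\varphi\vee\psi)=\mu(\varphi)+\mu(\psi)$ whenever $\neg(\varphi\wedge\psi)$ is valid. $\mu$ is Gaifman if for every pair $r,s$ of closed terms of the same function type $\alpha\to\beta$, $\mu(r=s)=\inf_{\{t_1,\dots,t_n\}}\mu(\bigwedge_{i=1}^n((r\,t_i)=(s\,t_i)))$ over all finite sets of closed terms of type $\alpha$. *)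

From Stdlib Require Import Reals List Bool Arith.
Import ListNotations.
Open Scope R_scope.

Set Implicit Arguments.

Inductive ty : Type := TO | TI | Arr (a b : ty).

Definition ty_eq_dec (a b : ty) : {a = b} + {a <> b}.
Proof. decide equality. Defined.

Definition var_eq_dec (v w : nat * ty) : {v = w} + {v <> w}.
Proof. decide equality; [apply ty_eq_dec | apply Nat.eq_dec]. Defined.

Section Syntax.
Context {C : Type} (cty : C -> ty).

(** Intrinsically typed terms; a variable is a pair (name, type). *)
Inductive tm : ty -> Type :=
| V (n : nat) (a : ty) : tm a
| K (c : C) : tm (cty c)
| Q (a : ty) : tm (Arr a (Arr a TO))                (* equality constant *)
| A {a b : ty} : tm (Arr a b) -> tm a -> tm b
| L (n : nat) (a : ty) {b : ty} : tm b -> tm (Arr a b).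

Fixpoint fvs {b} (t : tm b) : list (nat * ty) :=
  match t with
  | V n a => [(n, a)]
  | K _ => []
  | Q _ => []
  | A f u => fvs f ++ fvs u
  | L n a body => filter (fun v => if var_eq_dec v (n, a) then false else true) (fvs body)
  end.

Definition closed {b} (t : tm b) : Prop := fvs t = [].

(** Substitution t{x/s} of a (closed) term s : tm a for the variable (x,a). *)
Fixpoint subst (x : nat) (a : ty) (s : tm a) {b} (t : tm b) : tm b :=
  match t in tm b return tm b with
  | V y c =>
      match ty_eq_dec a c with
      | left e => if Nat.eqb x y then eq_rect a tm s c e else V y c
      | right _ => V y c
      end
  | K c => K c
  | Q c => Q c
  | A f u => A (subst x s f) (subst x s u)
  | L y c body =>
      if (Nat.eqb x y && (if ty_eq_dec a c then true else false))%bool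
      then L y c body else L y c (subst x s body)
  end.

(** Connectives defined from equality (Andrews' Q0 definitions). *)
Definition EQ {a} (r s : tm a) : tm TO := A (A (Q a) r) s.
Definition TT : tm TO := EQ (Q TO) (Q TO).
Definition FF : tm TO := EQ (L 0 TO TT) (L 0 TO (V 0 TO)).
Definition NOT (p : tm TO) : tm TO := EQ FF p.
Definition NEQ {a} (r s : tm a) : tm TO := NOT (EQ r s).
(* and := λx λy. (λg. g T T) = (λg. g x y) *)
Definition ANDc : tm (Arr TO (Arr TO TO)) :=
  let G := Arr TO (Arr TO TO) in
  L 0 TO (L 1 TO (EQ (L 2 G (A (A (V 2 G) TT) TT))
                     (L 2 G (A (A (V 2 G) (V 0 TO)) (V 1 TO))))).
Definition AND (p q : tm TO) : tm TO := A (A ANDc p) q.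
Definition OR (p q : tm TO) : tm TO := NOT (AND (NOT p) (NOT q)).
Definition FORALL (x : nat) (a : ty) (p : tm TO) : tm TO := EQ (L x a p) (L x a TT).
Definition EXISTS (x : nat) (a : ty) (p : tm TO) : tm TO := NEQ (L x a p) (L x a FF).
Definition bigAnd (l : list (tm TO)) : tm TO := fold_right AND TT l.
Definition bigOr (l : list (tm TO)) : tm TO := fold_right OR FF l.

Record model : Type := {
  D : ty -> Type;
  app : forall a b, D (Arr a b) -> D a -> D b;
  app_ext : forall a b (f g : D (Arr a b)), (forall d, app f d = app g d) -> f = g;
  tv : D TO -> bool;                         (* D_o = {T, F} *)
  tv_inj : forall p q, tv p = tv q -> p = q;
  tv_surj : forall v, exists p, tv p = v;
  inh : forall a, D a;
  I : forall c, D (cty c);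
  den : (forall (n : nat) (a : ty), D a) -> forall a, tm a -> D a;
  den_V : forall g n a, den g (V n a) = g n a;
  den_K : forall g c, den g (K c) = I c;
  den_Q : forall g a (d e : D a),
      tv (app (app (den g (Q a)) d) e) = true <-> d = e;
  den_A : forall g a b (f : tm (Arr a b)) (u : tm a),
      den g (A f u) = app (den g f) (den g u);
  den_L : forall g n a b (t : tm b) (d : D a),
      app (den g (L n a t)) d =
      den (fun m c => match ty_eq_dec a c with
                      | left e => if Nat.eqb n m then eq_rect a D d c e else g m c
                      | right _ => g m c
                      end) t
}.

Definition true_in (M : model) (p : tm TO) : Prop :=
  forall g, tv M (den M g p) = true.

Definition valid (p : tm TO) : Prop := forall M : model, true_in M p.

(** Probability on sentences (mu is only ever used on closed formulas). *)
Definition probability (mu : tm TO -> R) : Prop :=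
  (forall p, closed p -> 0 <= mu p) /\
  (forall p, closed p -> valid p -> mu p = 1) /\
  (forall p q, closed p -> closed q -> valid (NOT (AND p q)) ->
               mu (OR p q) = mu p + mu q).

End Syntax.

Arguments V {C cty} n a.
Arguments K {C cty} c.
Arguments Q {C cty} a.
Arguments A {C cty a b} _ _.
Arguments L {C cty} n a {b} _.

Definition is_sup (E : R -> Prop) (x : R) : Prop := is_lub E x.
Definition is_inf (E : R -> Prop) (x : R) : Prop :=
  (forall y, E y -> x <= y) /\ (forall z, (forall y, E y -> z <= y) -> z <= x).

Section Conditions.
Context {C : Type} (cty : C -> ty) (mu : tm cty TO -> R).

Definition closed_list {a} (l : list (tm cty a)) : Prop := Forall (fun t => closed t) l.

Definition gaifman : Prop :=
  forall a b (r s : tm cty (Arr a b)), closed r -> closed s ->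
    is_inf (fun y => exists l : list (tm cty a), closed_list l /\
              y = mu (bigAnd (map (fun t => EQ (A r t) (A s t)) l)))
           (mu (EQ r s)).

Definition cond_neq_sup : Prop :=
  forall a b (r s : tm cty (Arr a b)), closed r -> closed s ->
    is_sup (fun y => exists l : list (tm cty a), closed_list l /\
              y = mu (bigOr (map (fun t => NEQ (A r t) (A s t)) l)))
           (mu (NEQ r s)).

Definition single_free (x : nat) (a : ty) (phi : tm cty TO) : Prop :=
  forall v, In v (fvs phi) <-> v = (x, a).

Definition cond_exists_sup : Prop :=
  forall (x : nat) (a : ty) (phi : tm cty TO), single_free x a phi ->
    is_sup (fun y => exists l : list (tm cty a), closed_list l /\
              y = mu (bigOr (map (fun t => subst x t phi) l)))
           (mu (EXISTS x a phi)).

Definition cond_forall_inf : Prop :=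
  forall (x : nat) (a : ty) (phi : tm cty TO), single_free x a phi ->
    is_inf (fun y => exists l : list (tm cty a), closed_list l /\
              y = mu (bigAnd (map (fun t => subst x t phi) l)))
           (mu (FORALL x a phi)).
End Conditions.

From Pilot Require Import Defs.
From Stdlib Require Import Reals List Bool Lra Eqdep_dec.
Open Scope R_scope.

(* Every step is a comparison of sentences that have the same truth value in
   every Henkin model, hence the same probability.  Since [mu (NOT p) = 1 - mu p],
   the map [y |-> 1 - y] turns the infimum over finite conjunctions of [r t = s t]
   into the supremum over the complementary disjunctions of [r t <> s t], giving
   (1) <-> (2), and likewise turns (4) for [phi] into (3) for [NOT phi].  For
   (2) <-> (3): [EXISTS x a phi] is by definition [L x a phi <> L x a FF], whose
   instances at [t] are equivalent to [phi{x/t}] by the substitution lemma;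
   conversely [r <> s] is equivalent, by extensionality, to
   [EXISTS x a (r x <> s x)]. *)

Notation tvd M g p := (tv M (den M g p)).

Section Semantics.
Context {C : Type} {cty : C -> ty} (M : model cty).

Definition env : Type := nat -> forall a : ty, D M a.

(* Written exactly as in the axiom [den_L], so that [den_L_upd] holds by conversion. *)
Definition upd (g : env) (n : nat) (a : ty) (d : D M a) : env :=
  fun m c => match ty_eq_dec a c with
             | left e => if Nat.eqb n m then eq_rect a (D M) d c e else g m c
             | right _ => g m c
             end.

Lemma den_L_upd g n a b (t : tm cty b) d :
  Defs.app M a b (den M g (L n a t)) d = den M (upd g n a d) t.
Proof. exact (den_L M g n a t d). Qed.

Lemma upd_same g n a d : upd g n a d n a = d.
Proof.
  unfold upd. destruct (ty_eq_dec a a) as [e|e]; [|congruence].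
  rewrite Nat.eqb_refl, (UIP_dec ty_eq_dec e eq_refl). reflexivity.
Qed.

Lemma upd_other g n a d m c : (n, a) <> (m, c) -> upd g n a d m c = g m c.
Proof.
  intro Hne. unfold upd. destruct (ty_eq_dec a c) as [e|e]; [|reflexivity].
  subst c. destruct (Nat.eqb n m) eqn:E; [|reflexivity].
  apply Nat.eqb_eq in E. subst. congruence.
Qed.

Lemma upd_comm g x a v y c d m e : (x, a) <> (y, c) ->
  upd (upd g y c d) x a v m e = upd (upd g x a v) y c d m e.
Proof.
  intros Hne.
  destruct (var_eq_dec (x, a) (m, e)) as [Ex|Ex].
  - inversion Ex; subst. rewrite upd_same, (upd_other _ y), upd_same; auto.
  - rewrite (upd_other _ x) by auto.
    destruct (var_eq_dec (y, c) (m, e)) as [Ey|Ey].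
    + inversion Ey; subst. rewrite !upd_same. reflexivity.
    + rewrite !upd_other by auto. reflexivity.
Qed.

(* By extensionality, [den_Q] determines the denotation of [Q a] uniquely. *)
Lemma den_Q_env g g' a : den M g (Q a) = den M g' (Q a).
Proof.
  apply app_ext; intro d. apply app_ext; intro e. apply tv_inj.
  destruct (tv M (Defs.app M _ _ (Defs.app M _ _ (den M g (Q a)) d) e)) eqn:E;
  destruct (tv M (Defs.app M _ _ (Defs.app M _ _ (den M g' (Q a)) d) e)) eqn:E'; auto.
  - apply (den_Q M g a d e) in E. subst. rewrite <- E'. symmetry. apply (den_Q M g' a e e). auto.
  - apply (den_Q M g' a d e) in E'. subst. rewrite <- E. apply (den_Q M g a e e). auto.
Qed.

Lemma den_fvs_env {b} (t : tm cty b) : forall g g',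
  (forall n a, In (n, a) (fvs t) -> g n a = g' n a) -> den M g t = den M g' t.
Proof.
  induction t; intros g g' Hfv; simpl in Hfv.
  - rewrite !den_V. auto.
  - rewrite !den_K. reflexivity.
  - apply den_Q_env.
  - rewrite !den_A. f_equal; [apply IHt1 | apply IHt2]; intros; apply Hfv, in_or_app; auto.
  - apply app_ext; intro d. rewrite !den_L_upd. apply IHt. intros m c Hm.
    destruct (var_eq_dec (n, a) (m, c)) as [E|E].
    + inversion E; subst. rewrite !upd_same. reflexivity.
    + rewrite !upd_other by auto. apply Hfv, filter_In. split; auto.
      destruct (var_eq_dec (m, c) (n, a)); congruence.
Qed.

Lemma den_closed_env {b} (t : tm cty b) g g' : closed t -> den M g t = den M g' t.
Proof. intro Ht. apply den_fvs_env. unfold closed in Ht. rewrite Ht. contradiction. Qed.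

Lemma den_subst {b} (t : tm cty b) : forall g x a (s : tm cty a), closed s ->
  den M g (subst x s t) = den M (upd g x a (den M g s)) t.
Proof.
  induction t; intros g x a0 s Hs; simpl.
  - rewrite den_V. destruct (var_eq_dec (x, a0) (n, a)) as [E|E].
    + inversion E; subst. rewrite upd_same.
      destruct (ty_eq_dec a a) as [e|e]; [|congruence].
      rewrite (UIP_dec ty_eq_dec e eq_refl), Nat.eqb_refl. reflexivity.
    + rewrite upd_other by auto.
      destruct (ty_eq_dec a0 a) as [e|e]; [subst a|apply den_V].
      destruct (Nat.eqb x n) eqn:En; [apply Nat.eqb_eq in En; congruence | apply den_V].
  - rewrite !den_K. reflexivity.
  - apply den_Q_env.
  - rewrite !den_A, IHt1, IHt2 by auto. reflexivity.
  - destruct (Nat.eqb x n && (if ty_eq_dec a0 a then true else false))%bool eqn:Ec.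
    + apply andb_true_iff in Ec as [En Ea]. apply Nat.eqb_eq in En.
      destruct (ty_eq_dec a0 a); [subst | discriminate].
      apply den_fvs_env. intros m c Hm. simpl in Hm. apply filter_In in Hm as [_ Hm].
      rewrite upd_other; auto. intro E. inversion E; subst.
      destruct (var_eq_dec (m, c) (m, c)); congruence.
    + assert (Hne : (x, a0) <> (n, a)).
      { intro E. inversion E; subst. rewrite Nat.eqb_refl in Ec.
        destruct (ty_eq_dec a a); simpl in Ec; congruence. }
      apply app_ext; intro d. rewrite !den_L_upd, IHt by auto.
      rewrite (den_closed_env s (upd g n a d) g) by auto.
      apply den_fvs_env. intros. apply upd_comm. auto.
Qed.

Lemma sem_EQ g a (r s : tm cty a) : tvd M g (EQ r s) = true <-> den M g r = den M g s.
Proof. unfold EQ. rewrite !den_A. apply den_Q. Qed.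

Lemma sem_EQ_o g (p q : tm cty TO) : tvd M g (EQ p q) = Bool.eqb (tvd M g p) (tvd M g q).
Proof.
  apply eq_iff_eq_true. rewrite sem_EQ, eqb_true_iff. split.
  - intros ->. reflexivity.
  - apply tv_inj.
Qed.

Lemma sem_EQ_L g x a (p q : tm cty TO) :
  tvd M g (EQ (L x a p) (L x a q)) = true <->
  forall d, tvd M (upd g x a d) p = tvd M (upd g x a d) q.
Proof.
  rewrite sem_EQ. split.
  - intros E d. rewrite <- !den_L_upd, E. reflexivity.
  - intro H. apply app_ext. intro d. rewrite !den_L_upd. apply tv_inj, H.
Qed.

Lemma sem_TT g : tvd M g (TT cty) = true.
Proof. apply sem_EQ. reflexivity. Qed.

Lemma sem_FF g : tvd M g (FF cty) = false.
Proof.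
  destruct (tvd M g (FF cty)) eqn:E; auto.
  unfold FF in E. rewrite sem_EQ_L in E.
  destruct (tv_surj M false) as [d Hd].
  specialize (E d). rewrite sem_TT, den_V, upd_same, Hd in E. discriminate.
Qed.

Lemma sem_NOT g p : tvd M g (NOT p) = negb (tvd M g p).
Proof. unfold NOT. rewrite sem_EQ_o, sem_FF. destruct (tvd M g p); reflexivity. Qed.

Lemma sem_FORALL g x a (phi : tm cty TO) :
  tvd M g (FORALL x a phi) = true <-> forall d, tvd M (upd g x a d) phi = true.
Proof. unfold FORALL. rewrite sem_EQ_L. setoid_rewrite sem_TT. reflexivity. Qed.

Lemma sem_EXISTS_false g x a (phi : tm cty TO) :
  tvd M g (EXISTS x a phi) = false <-> forall d, tvd M (upd g x a d) phi = false.
Proof.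
  unfold EXISTS, NEQ. rewrite sem_NOT, negb_false_iff, sem_EQ_L.
  setoid_rewrite sem_FF. reflexivity.
Qed.

(* The two sides of the equation in [ANDc] are separated by the projections
   [fun x y => x] and [fun x y => y] unless [p] and [q] are both true. *)
Lemma sem_AND g p q : tvd M g (AND p q) = (tvd M g p && tvd M g q)%bool.
Proof.
  unfold AND, ANDc; cbv zeta. rewrite !den_A, !den_L_upd.
  set (G := Arr TO (Arr TO TO)).
  set (g2 := upd (upd g 0 TO (den M g p)) 1 TO (den M g q)).
  assert (Hx : forall h, upd g2 2 G h 0%nat TO = den M g p).
  { intro h. rewrite upd_other by congruence. unfold g2.
    rewrite upd_other by congruence. apply upd_same. }
  assert (Hy : forall h, upd g2 2 G h 1%nat TO = den M g q).
  { intro h. rewrite upd_other by congruence. apply upd_same. }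
  assert (Hfst : forall x y,
    Defs.app M _ _ (Defs.app M _ _ (den M g (L 3 TO (L 4 TO (V 3 TO)))) x) y = x).
  { intros. rewrite !den_L_upd, den_V, upd_other by congruence. apply upd_same. }
  assert (Hsnd : forall x y,
    Defs.app M _ _ (Defs.app M _ _ (den M g (L 3 TO (L 4 TO (V 4 TO)))) x) y = y).
  { intros. rewrite !den_L_upd, den_V. apply upd_same. }
  apply eq_iff_eq_true. rewrite sem_EQ_L, andb_true_iff. split.
  - intro H. split.
    + specialize (H (den M g (L 3 TO (L 4 TO (V 3 TO))))).
      rewrite !den_A, !den_V, upd_same, Hx, Hy, !Hfst, sem_TT in H. auto.
    + specialize (H (den M g (L 3 TO (L 4 TO (V 4 TO))))).
      rewrite !den_A, !den_V, upd_same, Hx, Hy, !Hsnd, sem_TT in H. auto.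
  - intros [Hp Hq] h. rewrite !den_A, !den_V, upd_same, Hx, Hy.
    do 2 f_equal; [f_equal|]; apply tv_inj; rewrite sem_TT; auto.
Qed.

Lemma sem_OR g p q : tvd M g (OR p q) = (tvd M g p || tvd M g q)%bool.
Proof.
  unfold OR. rewrite sem_NOT, sem_AND, !sem_NOT.
  destruct (tvd M g p), (tvd M g q); reflexivity.
Qed.

End Semantics.

Section Closedness.
Context {C : Type} {cty : C -> ty}.

Lemma closed_A a b (f : tm cty (Arr a b)) (u : tm cty a) :
  closed f -> closed u -> closed (A f u).
Proof. unfold closed. simpl. intros -> ->. reflexivity. Qed.

Lemma closed_EQ a (r s : tm cty a) : closed r -> closed s -> closed (EQ r s).
Proof. intros. unfold EQ. repeat apply closed_A; auto; reflexivity. Qed.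

Lemma closed_NOT (p : tm cty TO) : closed p -> closed (NOT p).
Proof. intros. apply closed_EQ; auto; reflexivity. Qed.

Lemma closed_NEQ a (r s : tm cty a) : closed r -> closed s -> closed (NEQ r s).
Proof. intros. apply closed_NOT, closed_EQ; auto. Qed.

Lemma closed_AND (p q : tm cty TO) : closed p -> closed q -> closed (AND p q).
Proof. intros. unfold AND. repeat apply closed_A; auto; reflexivity. Qed.

Lemma closed_OR (p q : tm cty TO) : closed p -> closed q -> closed (OR p q).
Proof. intros. unfold OR. auto using closed_NOT, closed_AND. Qed.

Lemma closed_bigAnd (l : list (tm cty TO)) : Forall (fun p => closed p) l -> closed (bigAnd l).
Proof. induction 1; simpl; [reflexivity | auto using closed_AND]. Qed.

Lemma closed_bigOr (l : list (tm cty TO)) : Forall (fun p => closed p) l -> closed (bigOr l).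
Proof. induction 1; simpl; [reflexivity | auto using closed_OR]. Qed.

Lemma closed_map {a} (F : tm cty a -> tm cty TO) (l : list (tm cty a)) :
  (forall t, closed t -> closed (F t)) -> closed_list l -> Forall (fun p => closed p) (map F l).
Proof. intros HF Hl. apply Forall_map. eapply Forall_impl; [|exact Hl]. auto. Qed.

Lemma closed_L x a b (phi : tm cty b) :
  (forall v, In v (fvs phi) -> v = (x, a)) -> closed (L x a phi).
Proof.
  intro H. unfold closed. simpl. induction (fvs phi) as [|w l IH]; simpl; auto.
  rewrite (H w (or_introl eq_refl)). destruct (var_eq_dec (x, a) (x, a)); [|congruence].
  apply IH. intros; apply H; simpl; auto.
Qed.

Lemma closed_L_single_free x a (phi : tm cty TO) : single_free x a phi -> closed (L x a phi).
Proof. intro H. apply closed_L, H. Qed.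

Lemma closed_FORALL x a (phi : tm cty TO) : single_free x a phi -> closed (FORALL x a phi).
Proof. intro H. apply closed_EQ; [apply closed_L_single_free, H | reflexivity]. Qed.

Lemma closed_EXISTS x a (phi : tm cty TO) : single_free x a phi -> closed (EXISTS x a phi).
Proof. intro H. apply closed_NOT, closed_EQ; [apply closed_L_single_free, H | reflexivity]. Qed.

Lemma fvs_subst {b} (t : tm cty b) : forall x a (s : tm cty a) v, closed s ->
  In v (fvs (subst x s t)) -> In v (fvs t) /\ v <> (x, a).
Proof.
  induction t; intros x a0 s v Hs Hv; simpl in *.
  - destruct (ty_eq_dec a0 a) as [e|e].
    + subst a. destruct (Nat.eqb x n) eqn:En.
      * unfold closed in Hs. simpl in Hv. rewrite Hs in Hv. destruct Hv.
      * destruct Hv as [Hv|[]]. subst. split; auto.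
        intro E; inversion E; subst. rewrite Nat.eqb_refl in En. discriminate.
    + destruct Hv as [Hv|[]]. subst. split; auto. intro E; inversion E; congruence.
  - destruct Hv.
  - destruct Hv.
  - rewrite in_app_iff in *. destruct Hv as [Hv|Hv].
    + destruct (IHt1 x a0 s v Hs Hv). auto.
    + destruct (IHt2 x a0 s v Hs Hv). auto.
  - destruct (Nat.eqb x n && (if ty_eq_dec a0 a then true else false))%bool eqn:Ec.
    + apply andb_true_iff in Ec as [En Ea]. apply Nat.eqb_eq in En.
      destruct (ty_eq_dec a0 a); [subst | discriminate]. simpl in Hv. split; auto.
      apply filter_In in Hv as [_ Hv]. intro E; subst.
      destruct (var_eq_dec (n, a) (n, a)); congruence.
    + simpl in Hv. apply filter_In in Hv as [Hv1 Hv2].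
      destruct (IHt x a0 s v Hs Hv1). split; auto. apply filter_In. auto.
Qed.

Lemma closed_subst x a (phi : tm cty TO) (t : tm cty a) :
  single_free x a phi -> closed t -> closed (subst x t phi).
Proof.
  intros Hphi Ht. unfold closed. destruct (fvs (subst x t phi)) as [|v l] eqn:E; auto.
  destruct (fvs_subst phi x _ t v Ht) as [H1 H2]; [rewrite E; left; reflexivity|].
  exfalso. apply H2, Hphi, H1.
Qed.

Lemma single_free_NOT x a (phi : tm cty TO) : single_free x a phi -> single_free x a (NOT phi).
Proof. intros H v. apply H. Qed.

Lemma closed_list_In {a} (l : list (tm cty a)) t :
  closed_list l -> In t l -> closed t.
Proof. intros Hl. apply Forall_forall, Hl. Qed.

End Closedness.

Global Hint Resolve closed_A closed_EQ closed_NOT closed_NEQ closed_AND closed_OR closed_bigAnd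
  closed_bigOr closed_map closed_subst closed_L_single_free closed_FORALL closed_EXISTS
  single_free_NOT : closed.
Global Hint Extern 1 (closed (L _ _ (FF _))) => reflexivity : closed.

Lemma eq_false_iff_eq (b c : bool) : (b = false <-> c = false) -> b = c.
Proof. destruct b, c; intuition congruence. Qed.

Section Equivalence.
Context {C : Type} {cty : C -> ty}.

Definition equiv (p q : tm cty TO) : Prop :=
  forall (M : model cty) g, tvd M g p = tvd M g q.

Lemma equiv_bigOr {X : Type} (f h : X -> tm cty TO) (l : list X) :
  (forall x, In x l -> equiv (f x) (h x)) -> equiv (bigOr (map f l)) (bigOr (map h l)).
Proof.
  induction l as [|x l IH]; intros H M g; simpl; [reflexivity|].
  rewrite !sem_OR, H, IH; [reflexivity | intros; apply H |]; simpl; auto.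
Qed.

Lemma bigOr_NOT_equiv {X : Type} (f h : X -> tm cty TO) (l : list X) :
  (forall x, In x l -> equiv (f x) (NOT (h x))) ->
  equiv (bigOr (map f l)) (NOT (bigAnd (map h l))).
Proof.
  induction l as [|x l IH]; intros H M g; simpl; rewrite sem_NOT.
  - rewrite sem_FF, sem_TT. reflexivity.
  - rewrite sem_OR, sem_AND, H, IH, !sem_NOT.
    + destruct (tvd M g (h x)); reflexivity.
    + intros; apply H; simpl; auto.
    + simpl; auto.
Qed.

Lemma EXISTS_NOT_FORALL_equiv x a (psi phi : tm cty TO) :
  (forall M g, tvd M g psi = negb (tvd M g phi)) ->
  equiv (EXISTS x a psi) (NOT (FORALL x a phi)).
Proof.
  intros Hneg M g. apply eq_false_iff_eq.
  rewrite sem_NOT, negb_false_iff, sem_EXISTS_false, sem_FORALL.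
  setoid_rewrite Hneg. setoid_rewrite negb_false_iff. reflexivity.
Qed.

Lemma NEQ_beta_FF_equiv x a (phi : tm cty TO) (t : tm cty a) : closed t ->
  equiv (NEQ (A (L x a phi) t) (A (L x a (FF cty)) t)) (subst x t phi).
Proof.
  intros Ht M g. unfold NEQ.
  rewrite sem_NOT, sem_EQ_o, !den_A, !den_L_upd, sem_FF, den_subst by exact Ht.
  destruct (tvd M (upd M g x a (den M g t)) phi); reflexivity.
Qed.

Section AppVar.
Context {a b : ty} (r s : tm cty (Arr a b)) (Hr : closed r) (Hs : closed s) (x : nat).

Lemma single_free_NEQ_app_var : single_free x a (NEQ (A r (V x a)) (A s (V x a))).
Proof.
  intro v. unfold closed in Hr, Hs. unfold NEQ, NOT, EQ. simpl.
  rewrite Hr, Hs. simpl. intuition.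
Qed.

Lemma sem_NEQ_app_var_false (M : model cty) g :
  tvd M g (NEQ (A r (V x a)) (A s (V x a))) = false <->
  Defs.app M _ _ (den M g r) (g x a) = Defs.app M _ _ (den M g s) (g x a).
Proof. unfold NEQ. rewrite sem_NOT, negb_false_iff, sem_EQ, !den_A, !den_V. reflexivity. Qed.

Lemma subst_NEQ_app_var_equiv (t : tm cty a) : closed t ->
  equiv (subst x t (NEQ (A r (V x a)) (A s (V x a)))) (NEQ (A r t) (A s t)).
Proof.
  intros Ht M g. apply eq_false_iff_eq.
  rewrite den_subst, sem_NEQ_app_var_false, upd_same by exact Ht.
  rewrite (den_closed_env M r _ g), (den_closed_env M s _ g) by assumption.
  unfold NEQ. rewrite sem_NOT, negb_false_iff, sem_EQ, !den_A. reflexivity.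
Qed.

Lemma EXISTS_NEQ_app_var_equiv :
  equiv (EXISTS x a (NEQ (A r (V x a)) (A s (V x a)))) (NEQ r s).
Proof.
  intros M g. apply eq_false_iff_eq.
  unfold NEQ at 2. rewrite sem_NOT, negb_false_iff, sem_EXISTS_false, sem_EQ.
  setoid_rewrite sem_NEQ_app_var_false. setoid_rewrite upd_same.
  setoid_rewrite (fun d => den_closed_env M r (upd M g x a d) g Hr).
  setoid_rewrite (fun d => den_closed_env M s (upd M g x a d) g Hs).
  split; [apply app_ext | intros -> d]; reflexivity.
Qed.

End AppVar.

End Equivalence.

Lemma is_sup_ext (E E' : R -> Prop) x : (forall y, E y <-> E' y) -> is_sup E x -> is_sup E' x.
Proof.
  intros HE [Hub Hleast]. split.
  - intros y Hy. apply Hub, HE, Hy.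
  - intros b Hb. apply Hleast. intros y Hy. apply Hb, HE, Hy.
Qed.

Lemma is_inf_iff_is_sup_compl (E : R -> Prop) x :
  is_inf E x <-> is_sup (fun y => E (1 - y)) (1 - x).
Proof.
  unfold is_sup, is_lub, is_upper_bound, is_inf. split.
  - intros [Hlb Hgreatest]. split.
    + intros y Hy. apply Hlb in Hy. lra.
    + intros b Hb. enough (1 - b <= x) by lra. apply Hgreatest. intros y Hy.
      enough (1 - y <= b) by lra. apply Hb. replace (1 - (1 - y)) with y by lra. exact Hy.
  - intros [Hub Hleast]. split.
    + intros y Hy. enough (1 - y <= 1 - x) by lra. apply Hub.
      replace (1 - (1 - y)) with y by lra. exact Hy.
    + intros z Hz. enough (1 - x <= 1 - z) by lra. apply Hleast. intros y Hy.
      apply Hz in Hy. lra.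
Qed.

Section Probability.
Context {C : Type} {cty : C -> ty} (mu : tm cty TO -> R) (Hmu : probability mu).

Lemma mu_NOT p : closed p -> mu (NOT p) = 1 - mu p.
Proof.
  intro Hp. destruct Hmu as [_ [Hvalid Hadd]].
  assert (Hexcl : valid (NOT (AND p (NOT p)))).
  { intros M g. rewrite sem_NOT, sem_AND, sem_NOT. destruct (tvd M g p); reflexivity. }
  assert (Hcover : valid (OR p (NOT p))).
  { intros M g. rewrite sem_OR, sem_NOT. destruct (tvd M g p); reflexivity. }
  pose proof (Hadd p (NOT p) Hp (closed_NOT p Hp) Hexcl).
  pose proof (Hvalid _ (closed_OR p _ Hp (closed_NOT p Hp)) Hcover).
  lra.
Qed.

(* [p] and [NOT q] partition the sentences when [p] and [q] are equivalent. *)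
Lemma mu_equiv p q : closed p -> closed q -> equiv p q -> mu p = mu q.
Proof.
  intros Hp Hq Hpq. destruct Hmu as [_ [Hvalid Hadd]].
  assert (Hexcl : valid (NOT (AND p (NOT q)))).
  { intros M g. rewrite sem_NOT, sem_AND, sem_NOT, Hpq. destruct (tvd M g q); reflexivity. }
  assert (Hcover : valid (OR p (NOT q))).
  { intros M g. rewrite sem_OR, sem_NOT, Hpq. destruct (tvd M g q); reflexivity. }
  pose proof (Hadd p (NOT q) Hp (closed_NOT q Hq) Hexcl).
  pose proof (Hvalid _ (closed_OR p _ Hp (closed_NOT q Hq)) Hcover).
  rewrite mu_NOT in * by exact Hq. lra.
Qed.

Definition mu_range {a} (F : list (tm cty a) -> tm cty TO) (y : R) : Prop :=
  exists l, closed_list l /\ y = mu (F l).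

Lemma is_sup_mu_range_ext {a} (F G : list (tm cty a) -> tm cty TO) x :
  (forall l, closed_list l -> mu (F l) = mu (G l)) ->
  is_sup (mu_range F) x -> is_sup (mu_range G) x.
Proof.
  intro HFG. apply is_sup_ext. intro y.
  split; intros [l [Hl ->]]; exists l; rewrite HFG by exact Hl; auto.
Qed.

Lemma is_inf_iff_is_sup_mu_range_compl {a} (F G : list (tm cty a) -> tm cty TO) x :
  (forall l, closed_list l -> mu (G l) = 1 - mu (F l)) ->
  is_inf (mu_range F) x <-> is_sup (mu_range G) (1 - x).
Proof.
  intro HFG. rewrite is_inf_iff_is_sup_compl.
  assert (E : forall y, mu_range F (1 - y) <-> mu_range G y).
  { intro y. split; intros [l [Hl Hy]]; exists l; split; auto;
      rewrite HFG in * by exact Hl; lra. }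
  split; apply is_sup_ext; intro y; rewrite E; reflexivity.
Qed.

Lemma gaifman_iff_neq_sup_at {a b} (r s : tm cty (Arr a b)) : closed r -> closed s ->
  is_inf (mu_range (fun l => bigAnd (map (fun t => EQ (A r t) (A s t)) l))) (mu (EQ r s)) <->
  is_sup (mu_range (fun l => bigOr (map (fun t => NEQ (A r t) (A s t)) l))) (mu (NEQ r s)).
Proof.
  intros Hr Hs. unfold NEQ. rewrite mu_NOT by auto 10 with closed.
  apply is_inf_iff_is_sup_mu_range_compl. intros l Hl.
  rewrite <- mu_NOT; [| eauto 10 with closed].
  apply mu_equiv; [eauto 10 with closed .. |].
  apply bigOr_NOT_equiv. intros t _ M g. reflexivity.
Qed.

Lemma gaifman_iff_neq_sup : gaifman mu <-> cond_neq_sup mu.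
Proof.
  split; intros H a b r s Hr Hs; apply (gaifman_iff_neq_sup_at r s Hr Hs), H; assumption.
Qed.

Lemma neq_sup_exists_sup : cond_neq_sup mu -> cond_exists_sup mu.
Proof.
  intros H x a phi Hphi.
  apply (is_sup_mu_range_ext
    (fun l => bigOr (map (fun t => NEQ (A (L x a phi) t) (A (L x a (FF cty)) t)) l))).
  - intros l Hl. apply mu_equiv; [eauto 10 with closed .. |].
    apply equiv_bigOr. intros t Ht. apply NEQ_beta_FF_equiv, (closed_list_In l); auto.
  - apply H; auto with closed.
Qed.

Lemma exists_sup_neq_sup : cond_exists_sup mu -> cond_neq_sup mu.
Proof.
  intros H a b r s Hr Hs.
  set (phi := NEQ (A r (V 0 a)) (A s (V 0 a))).
  assert (Hphi : single_free 0 a phi) by exact (single_free_NEQ_app_var r s Hr Hs 0).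
  rewrite <- (mu_equiv (EXISTS 0 a phi)); [| auto with closed ..
                                           | apply EXISTS_NEQ_app_var_equiv; assumption].
  apply (is_sup_mu_range_ext (fun l => bigOr (map (fun t => subst 0 t phi) l))).
  - intros l Hl. apply mu_equiv; [eauto 10 with closed .. |].
    apply equiv_bigOr. intros t Ht.
    apply subst_NEQ_app_var_equiv; [assumption .. | exact (closed_list_In l t Hl Ht)].
  - apply H, Hphi.
Qed.

Lemma exists_sup_iff_forall_inf_at x a (psi phi : tm cty TO) :
  single_free x a psi -> single_free x a phi ->
  (forall M g, tvd M g psi = negb (tvd M g phi)) ->
  is_sup (mu_range (fun l => bigOr (map (fun t : tm cty a => subst x t psi) l)))
         (mu (EXISTS x a psi)) <->
  is_inf (mu_range (fun l => bigAnd (map (fun t : tm cty a => subst x t phi) l)))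
         (mu (FORALL x a phi)).
Proof.
  intros Hpsi Hphi Hneg.
  assert (Hex : mu (EXISTS x a psi) = 1 - mu (FORALL x a phi)).
  { rewrite <- mu_NOT; [| auto with closed].
    apply mu_equiv; [auto with closed .. |]. apply EXISTS_NOT_FORALL_equiv, Hneg. }
  rewrite Hex, is_inf_iff_is_sup_mu_range_compl with
    (G := fun l => bigOr (map (fun t : tm cty a => subst x t psi) l)); [reflexivity |].
  intros l Hl. rewrite <- mu_NOT; [| eauto 10 with closed].
  apply mu_equiv; [eauto 10 with closed .. |].
  apply bigOr_NOT_equiv. intros t Ht M g.
  rewrite sem_NOT, !den_subst by exact (closed_list_In l t Hl Ht). apply Hneg.
Qed.

Lemma exists_sup_iff_forall_inf : cond_exists_sup mu <-> cond_forall_inf mu.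
Proof.
  split; intros H x a phi Hphi.
  - apply (exists_sup_iff_forall_inf_at x a (NOT phi) phi); auto with closed.
    + intros M g. apply sem_NOT.
    + apply H. auto with closed.
  - apply (exists_sup_iff_forall_inf_at x a phi (NOT phi)); auto with closed.
    + intros M g. rewrite sem_NOT, negb_involutive. reflexivity.
    + apply H. auto with closed.
Qed.

End Probability.

Theorem mainTheorem6 (C : Type) (cty : C -> ty) (mu : tm cty TO -> R)
  (Hmu : probability mu) :
  (gaifman mu <-> cond_neq_sup mu) /\
  (cond_neq_sup mu <-> cond_exists_sup mu) /\
  (cond_exists_sup mu <-> cond_forall_inf mu).
Proof.
  split; [|split].
  - exact (gaifman_iff_neq_sup _ Hmu).
  - split; [exact (neq_sup_exists_sup _ Hmu) | exact (exists_sup_neq_sup _ Hmu)].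
  - exact (exists_sup_iff_forall_inf _ Hmu).
Qed.
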